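(* Let $\mathbb{F}$ be a field and $n \ge 1$ an integer. For each integer $K \ge 1$, let $M_n(K)$ denote the set of monomial ideals $I$ of $\mathbb{F}[X_1,\ldots,X_n]$ such that the quotient space $\mathbb{F}[X_1,\ldots,X_n]/I$ has dimension exactly $K$ over $\mathbb{F}$. Then $|M_n(1)| = 1$, and for every $K \ge 2$, $$|M_n(K)| \le K^n (K+n-2)^{(n-1)(K-1)} (2K-3)^{K-2}.$$ In particular, for every real number $R > 1$ there exists a constant $c$, depending only on $n$ and $R$, such that $|M_n(K)| \le c\, R^{K^{3/2}}$ for all integers $K \ge 1$.
   Context: A monomial ideal of $\mathbb{F}[X_1,\ldots,X_n]$ is an ideal generated by monomials $X_1^{j_1}\cdots X_n^{j_n}$. *)

From Stdlib Require Import Reals.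
From mathcomp Require Import all_boot all_algebra.
From mathcomp Require Import mpoly.

Set Implicit Arguments.
Unset Strict Implicit.
Unset Printing Implicit Defensive.

Import GRing.Theory.
Local Open Scope ring_scope.

Definition is_ideal (n : nat) (F : fieldType) (I : {mpoly F[n]} -> Prop) : Prop :=
  [/\ I 0,
      (forall p q, I p -> I q -> I (p + q)) &
      (forall p q, I q -> I (p * q))].

Definition generated_by_monomials (n : nat) (F : fieldType)
    (S : 'X_{1..n} -> Prop) (I : {mpoly F[n]} -> Prop) : Prop :=
  forall p, I p <->
    exists s : seq ({mpoly F[n]} * 'X_{1..n}),
      (forall x, List.In x s -> S x.2) /\
      p = \sum_(x <- s) x.1 * 'X_[x.2].

Definition monomial_ideal (n : nat) (F : fieldType) (I : {mpoly F[n]} -> Prop) : Prop :=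
  exists S : 'X_{1..n} -> Prop, generated_by_monomials S I.

Definition quot_dim_eq (n : nat) (F : fieldType) (I : {mpoly F[n]} -> Prop)
    (K : nat) : Prop :=
  exists b : 'I_K -> {mpoly F[n]},
    (forall c : 'I_K -> F, I (\sum_i c i *: b i) -> forall i, c i = 0) /\
    (forall p, exists c : 'I_K -> F, I (p - \sum_i c i *: b i)).

Definition in_M (n : nat) (F : fieldType) (K : nat) (I : {mpoly F[n]} -> Prop) : Prop :=
  monomial_ideal I /\ quot_dim_eq I K.

Definition same_set (n : nat) (F : fieldType) (I J : {mpoly F[n]} -> Prop) : Prop :=
  forall p, I p <-> J p.

Definition distinct_in_M (n : nat) (F : fieldType) (K m : nat)
    (f : 'I_m -> ({mpoly F[n]} -> Prop)) : Prop :=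
  (forall i, in_M K (f i)) /\ (forall i j, i != j -> ~ same_set (f i) (f j)).

(* |M_n(K)| <= N : every family of pairwise distinct members has size <= N *)
Definition card_M_le (n : nat) (F : fieldType) (K N : nat) : Prop :=
  forall m (f : 'I_m -> ({mpoly F[n]} -> Prop)), distinct_in_M K f -> (m <= N)%N.

Definition card_M_eq1 (n : nat) (F : fieldType) (K : nat) : Prop :=
  exists I : {mpoly F[n]} -> Prop, in_M K I /\ forall J, in_M K J -> same_set J I.

Definition card_M_leR (n : nat) (F : fieldType) (K : nat) (x : R) : Prop :=
  forall m (f : 'I_m -> ({mpoly F[n]} -> Prop)), distinct_in_M K f -> Rle (INR m) x.

From Stdlib Require Import Reals Lra Lia Psatz Classical ClassicalEpsilon.
From mathcomp Require Import all_boot all_algebra zify.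
From mathcomp Require Import mpoly.

(* A monomial ideal I is determined by its standard monomials, those not in I.
   They form a down-set of N^n; they are linearly independent modulo I, so when
   dim F[X]/I = K there are at most K of them, and all their exponents are below K.
   Hence I |-> (standard monomials) maps M_n(K) injectively into the down-sets of
   size at most K of the box {0..K-1}^n. A down-set of size k+1 arises from one of
   size k by adding an element of maximal weight, which lies one step above one of
   the k old elements in one of n directions; so there are at most (k-1)! n^(k-1)
   down-sets of size k and |M_n(K)| <= K! n^(K-1). Both stated bounds are
   elementary estimates of K! n^(K-1); the last one goes through (nK)^K and
   nK <= R^(sqrt K) for K large. *)

Set Implicit Arguments.
Unset Strict Implicit.
Unset Printing Implicit Defensive.
Import GRing.Theory.
Local Open Scope ring_scope.

Lemma mem_In (T : eqType) (x : T) s : x \in s -> List.In x s.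
Proof. by elim: s => //= y s IHs; rewrite inE => /predU1P [->|/IHs]; auto. Qed.

Section FreeModuloSubspace.
Variables (F : fieldType) (V : lmodType F) (I : V -> Prop).
Hypotheses (I0 : I 0) (I_lin : forall k x y, I x -> I y -> I (k *: x + y)).

Lemma subspace_sum_mem p (k : 'I_p -> F) (x : 'I_p -> V) :
  (forall j, I (x j)) -> I (\sum_j k j *: x j).
Proof.
move=> Ix; apply: (big_ind I) => // [y z Iy Iz|j _]; last first.
  by rewrite -[_ *: _]addr0; apply: I_lin.
by rewrite -[y]scale1r; apply: I_lin.
Qed.

Lemma free_modulo_card_le K p (b : 'I_K -> V) (u : 'I_p -> V) :
  (forall x, exists c : 'I_K -> F, I (x - \sum_i c i *: b i)) ->
  (forall v : 'I_p -> F, I (\sum_j v j *: u j) -> forall j, v j = 0) ->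
  (p <= K)%N.
Proof.
move=> span free; rewrite leqNgt; apply/negP => ltKp.
have [c Ic] := fin_all_exists (fun j => span (u j)).
pose C : 'M[F]_(p, K) := \matrix_(j, i) c j i.
have [v vC0 v_neq0] : exists2 v : 'rV_p, v *m C = 0 & v != 0.
  have not_free : ~~ row_free C.
    by rewrite -row_leq_rank -ltnNge (leq_ltn_trans (rank_leq_col C)).
  apply: NNPP => no_rel; case/negP: not_free; apply: inj_row_free => v vC0.
  by apply/eqP/negPn/negP => v_neq0; apply: no_rel; exists v.
have decomp : \sum_j v 0 j *: u j
    = \sum_j v 0 j *: (u j - \sum_i c j i *: b i) + \sum_i (v *m C) 0 i *: b i.
  have -> : \sum_i (v *m C) 0 i *: b i = \sum_j v 0 j *: \sum_i c j i *: b i.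
    under [RHS]eq_bigr do rewrite scaler_sumr.
    rewrite exchange_big /=; apply: eq_bigr => i _.
    by rewrite !mxE scaler_suml; apply: eq_bigr => j _; rewrite scalerA mxE.
  by under [X in X + _]eq_bigr do rewrite scalerBr; rewrite sumrB subrK.
have /free v0 : I (\sum_j v 0 j *: u j).
  rewrite decomp vC0; under [X in _ + X]eq_bigr do rewrite mxE scale0r.
  by rewrite big1_eq addr0; apply: subspace_sum_mem.
by case/rV0Pn: v_neq0 => j; rewrite v0 eqxx.
Qed.

End FreeModuloSubspace.

Section MonomialIdeals.
Variables (n : nat) (F : fieldType).
Implicit Types (I : {mpoly F[n]} -> Prop) (S : 'X_{1..n} -> Prop).

Definition multiple_of S (a : 'X_{1..n}) := exists2 s, S s & (s <= a)%MM.

Lemma mcoeffMX_eq0 (q : {mpoly F[n]}) m a : ~~ (m <= a)%MM -> (q * 'X_[m])@_a = 0.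
Proof.
move=> m_nle_a; apply/eqP; rewrite -[_ == 0]negbK -mcoeff_msupp.
apply: contra m_nle_a; rewrite (perm_mem (msuppMX q m)) => /mapP [m' _ ->].
exact: lem_addr.
Qed.

Lemma sum_multiples_generated S (l : seq 'X_{1..n}) (g : 'X_{1..n} -> F) :
  {in l, forall a, multiple_of S a} ->
  exists s : seq ({mpoly F[n]} * 'X_{1..n}),
    (forall x, List.In x s -> S x.2) /\
    \sum_(a <- l) g a *: 'X_[a] = \sum_(x <- s) x.1 * 'X_[x.2].
Proof.
elim: l => [|a l IHl] mult_l; first by exists [::]; rewrite !big_nil.
have [s Ss s_le_a] := mult_l a (mem_head a l).
have [s' [Ss' sum_l]] := IHl (fun b lb => mult_l b (mem_behead (s := a :: l) lb)).
exists ((g a *: 'X_[(a - s)%MM], s) :: s'); split; first by move=> x /= [<-|/Ss'].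
by rewrite !big_cons sum_l /= -scalerAl -mpolyXD submK.
Qed.

Lemma generated_by_monomialsP S I : generated_by_monomials S I ->
  forall p, I p <-> (forall a, ~ multiple_of S a -> p@_a = 0).
Proof.
move=> genI p; rewrite genI; split=> [[s [Ss ->]] a not_mult | p_std].
  rewrite raddf_sum /=; apply: big1_seq => x /andP [_ /mem_In sx].
  apply: mcoeffMX_eq0; apply: contra_notN not_mult => le_a.
  by exists x.2 => //; apply: Ss.
rewrite (mpolyE p); apply: sum_multiples_generated => a.
rewrite mcoeff_msupp => pa_neq0; apply: NNPP => /p_std pa0.
by rewrite pa0 eqxx in pa_neq0.
Qed.

Definition monomial_closed I :=
  (forall p, I p <-> (forall a, ~ I 'X_[a] -> p@_a = 0)) /\
  (forall a b, (a <= b)%MM -> I 'X_[a] -> I 'X_[b]).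

Lemma generated_monomial_closed S I :
  generated_by_monomials S I -> monomial_closed I.
Proof.
move=> genI; have memI := generated_by_monomialsP genI.
have memX a : I 'X_[a] <-> multiple_of S a.
  rewrite memI; split=> [X_std | mult b not_mult].
    apply: NNPP => /X_std; rewrite mcoeffX eqxx; exact/eqP/oner_neq0.
  by rewrite mcoeffX; case: eqP => // ab; case: not_mult; rewrite -ab.
split=> [p | a b le_ab /memX [s Ss le_sa]].
  by rewrite memI; split=> p_std a not_mult; apply: p_std => /memX.
by apply/memX; exists s; last exact: lepm_trans le_sa le_ab.
Qed.

Section StandardMonomials.
Variables (I : {mpoly F[n]} -> Prop) (K : nat).
Hypotheses (closedI : monomial_closed I) (dimI : quot_dim_eq I K).

Lemma monomial_closed_lin k p q : I p -> I q -> I (k *: p + q).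
Proof.
case: closedI => memI _; rewrite !memI => Ip Iq a a_std.
by rewrite mcoeffD mcoeffZ Ip // Iq // mulr0 addr0.
Qed.

Lemma standard_free p (t : 'I_p -> 'X_{1..n}) : injective t ->
  (forall j, ~ I 'X_[t j]) ->
  forall v : 'I_p -> F, I (\sum_j v j *: 'X_[t j]) -> forall j, v j = 0.
Proof.
move=> inj_t t_std v Iv j; have := proj1 (proj1 closedI _) Iv (t j) (t_std j).
rewrite raddf_sum (bigD1 j) //= big1 ?addr0 => [|k neq_kj].
  by rewrite mcoeffZ mcoeffX eqxx mulr1.
by rewrite mcoeffZ mcoeffX (inj_eq inj_t) (negbTE neq_kj) mulr0.
Qed.

Lemma card_standard_le p (t : 'I_p -> 'X_{1..n}) : injective t ->
  (forall j, ~ I 'X_[t j]) -> (p <= K)%N.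
Proof.
move=> inj_t t_std; have [b [_ span]] := dimI.
apply: (free_modulo_card_le _ monomial_closed_lin span (standard_free inj_t t_std)).
by apply/(proj1 closedI) => a _; rewrite mcoeff0.
Qed.

Lemma monomial1_notin : (0 < K)%N -> ~ I 'X_[0%MM].
Proof.
case: closedI dimI => memI upI [b [free _]] K_gt0 I1.
have Iall p : I p.
  by apply/memI => a; case; apply: upI I1; apply/mnm_lepP => i; rewrite mnm0E.
by have /eqP := free (fun=> 1) (Iall _) (Ordinal K_gt0); rewrite oner_eq0.
Qed.

Lemma standard_exponent_lt a : ~ I 'X_[a] -> forall i, (a i < K)%N.
Proof.
move=> a_std i.
pose t (l : 'I_(a i).+1) := [multinom (if j == i then l : nat else 0%N) | j < n].
apply: (card_standard_le (t := t)) => [l1 l2 /mnmP /(_ i)|l].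
  by rewrite !mnmE eqxx => /val_inj.
apply: contra_not a_std; apply: (proj2 closedI); apply/mnm_lepP => j.
by rewrite mnmE; case: eqP => [->|//]; rewrite -ltnS.
Qed.

End StandardMonomials.
End MonomialIdeals.

Local Close Scope ring_scope.

Lemma leq_card_bigcup (I T : finType) (P : pred I) (A : I -> {set T}) :
  #|\bigcup_(i | P i) A i| <= \sum_(i | P i) #|A i|.
Proof.
elim/big_rec2: _ => [|i s U _ IH]; first by rewrite cards0.
by apply: leq_trans (leq_card_setU _ _) _; rewrite leq_add2l.
Qed.

Section DownSets.
Variables (n B : nat).

Definition box := {ffun 'I_n -> 'I_B.+1}.
Implicit Types (x y d m : box) (D : {set box}).

Definition box_le x y := [forall i, x i <= y i].
Definition downset D := [forall x in D, forall y, box_le y x ==> (y \in D)].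
Definition downsets k := [set D | downset D & #|D| == k].
Definition weight x := \sum_i (x i : nat).
Definition box0 : box := [ffun _ => ord0].
(* [inord] wraps out-of-range values to 0: [incr] is only used as the inverse
   of [decr] on a positive coordinate. *)
Definition incr d i : box := [ffun j => if j == i then inord (d j).+1 else d j].
Definition decr d i : box := [ffun j => if j == i then inord (d j).-1 else d j].
Definition extensions D := [set D :|: [set incr d i] | d in D, i in [set: 'I_n]].

Lemma downsetP D : downset D -> forall x y, x \in D -> box_le y x -> y \in D.
Proof. by move=> /forall_inP downD x y xD /(implyP (forallP (downD x xD) y)). Qed.

Lemma box0_le x : box_le box0 x.
Proof. by apply/forallP => i; rewrite ffunE. Qed.

Lemma box_le_weight_eq x y : box_le y x -> weight x <= weight y -> y = x.
Proof.
move=> /forallP le_yx le_w.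
have wx : weight x = weight y + \sum_i (x i - y i).
  by rewrite /weight -big_split /=; apply: eq_bigr => i _; rewrite subnKC.
have : \sum_i (x i - y i) == 0.
  by rewrite -(eqn_add2l (weight y)) addn0 -wx eqn_leq le_w wx leq_addr.
rewrite sum_nat_eq0 => /forallP diff0; apply/ffunP => i; apply/val_inj/eqP.
by rewrite eqn_leq le_yx -subn_eq0 (implyP (diff0 i)).
Qed.

Lemma card_downsets1 : #|downsets 1| <= 1.
Proof.
suff : downsets 1 \subset [set [set box0]] by move/subset_leq_card; rewrite cards1.
apply/subsetP => D; rewrite !inE => /andP [downD /cards1P [x Dx]].
have : box0 \in D by apply: (downsetP downD (x := x)); rewrite ?Dx ?inE ?box0_le.
by rewrite Dx inE => /eqP <-.
Qed.

Lemma card_extensions D : #|extensions D| <= #|D| * n.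
Proof.
rewrite /extensions curry_imset2X; apply: leq_trans (leq_imset_card _ _) _.
by rewrite cardsX cardsT card_ord.
Qed.

Lemma downsetD1_max D m : downset D -> m \in D ->
  (forall x, x \in D -> weight x <= weight m) -> downset (D :\ m).
Proof.
move=> downD mD m_max; apply/forall_inP => x; rewrite !inE => /andP [xm xD].
apply/forallP => y; apply/implyP => le_yx; rewrite !inE (downsetP downD xD le_yx) andbT.
apply/eqP => ym; subst y.
by move: xm; rewrite (box_le_weight_eq le_yx (m_max x xD)) eqxx.
Qed.

Lemma max_weight_pos D m : 1 < #|D| -> m \in D ->
  (forall x, x \in D -> weight x <= weight m) -> exists i, 0 < m i.
Proof.
move=> D_gt1 mD m_max; apply: NNPP => no_pos.
have wm0 : weight m = 0.
  apply/eqP; rewrite sum_nat_eq0; apply/forallP => i /=.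
  by apply: contra_notT no_pos; rewrite -lt0n => m_pos; exists i.
suff : D \subset [set box0] by move/subset_leq_card; rewrite cards1 leqNgt D_gt1.
apply/subsetP => x xD; rewrite inE; apply/eqP/esym/box_le_weight_eq; first exact: box0_le.
by apply: leq_trans (m_max x xD) _; rewrite wm0.
Qed.

Lemma decr_le d i : box_le (decr d i) d.
Proof.
apply/forallP => j; rewrite ffunE; case: eqP => [->|//].
by rewrite inordK ?leq_pred // (leq_ltn_trans (leq_pred _) (ltn_ord _)).
Qed.

Lemma decr_neq d i : 0 < d i -> decr d i != d.
Proof.
move=> di_pos; apply/negP => /eqP /ffunP /(_ i); rewrite ffunE eqxx.
move=> /(congr1 val) /=; rewrite inordK ?(leq_ltn_trans (leq_pred _) (ltn_ord _)) //.
by move=> di_eq; move: di_pos; rewrite -ltn_predL di_eq ltnn.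
Qed.

Lemma incr_decr d i : 0 < d i -> incr (decr d i) i = d.
Proof.
move=> di_pos; apply/ffunP => j; rewrite !ffunE; case: eqP => [->|//].
apply/val_inj => /=.
rewrite (@inordK _ (d i).-1) ?(leq_ltn_trans (leq_pred _) (ltn_ord _)) //.
by rewrite prednK // inordK.
Qed.

(* Removing an element of maximal weight keeps a down-set, and that element
   lies one step above a remaining one. *)
Lemma downset_extension k D : 0 < k -> D \in downsets k.+1 ->
  exists2 D', D' \in downsets k & D \in extensions D'.
Proof.
rewrite inE => k_gt0 /andP [downD /eqP cardD].
have [x0 x0D] : exists x0, x0 \in D by apply/set0Pn; rewrite -card_gt0 cardD.
have [m mD m_max] := @arg_maxnP _ x0 (mem D) weight x0D.
have {}mD : m \in D := mD.
have D_gt1 : 1 < #|D| by rewrite cardD ltnS.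
have [i mi_pos] := max_weight_pos D_gt1 mD m_max.
exists (D :\ m).
  by rewrite inE downsetD1_max //= -eqSS -cardD (cardsD1 m D) mD.
apply/imset2P; exists (decr m i) i => //.
  by rewrite !inE decr_neq // (downsetP downD mD (decr_le m i)).
by rewrite incr_decr // setUC setD1K.
Qed.

Lemma card_downsetsS k : 0 < k -> #|downsets k.+1| <= #|downsets k| * (k * n).
Proof.
move=> k_gt0.
have : downsets k.+1 \subset \bigcup_(D' in downsets k) extensions D'.
  apply/subsetP => D /(downset_extension k_gt0) [D' D'k DD'].
  by apply/bigcupP; exists D'.
move/subset_leq_card/leq_trans; apply; apply: leq_trans (leq_card_bigcup _ _) _.
rewrite -sum_nat_const; apply: leq_sum => D'; rewrite inE => /andP [_ /eqP <-].
exact: card_extensions.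
Qed.

Lemma card_downsets k : 0 < k -> #|downsets k| <= (k.-1)`! * n ^ k.-1.
Proof.
elim: k => // [[_ _|k IHk _]]; first by rewrite card_downsets1.
apply: leq_trans (card_downsetsS _) _ => //.
rewrite /= factS expnS.
rewrite [X in _ <= X](_ : _ = k`! * n ^ k * (k.+1 * n)); last by rewrite mulnACA mulnC.
by rewrite leq_mul2r IHk ?orbT.
Qed.

Lemma card_small_downsets K : 0 < n ->
  #|[set D | downset D & 0 < #|D| <= K]| <= K`! * n ^ K.-1.
Proof.
move=> n_gt0.
have : [set D | downset D & 0 < #|D| <= K] \subset \bigcup_(k < K) downsets k.+1.
  apply/subsetP => D; rewrite inE => /andP [downD /andP [D_gt0 DK]].
  have ltDK : #|D|.-1 < K by rewrite prednK.
  apply/bigcupP; exists (Ordinal ltDK) => //=.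
  by rewrite prednK // inE downD eqxx.
move/subset_leq_card/leq_trans; apply; apply: leq_trans (leq_card_bigcup _ _) _.
case: K => [|K]; first by rewrite big_ord0.
apply: leq_trans (_ : \sum_(k < K.+1) K`! * n ^ K <= _); last first.
  by rewrite sum_nat_const card_ord factS mulnA.
apply: leq_sum => k _; apply: leq_trans (card_downsets (ltn0Sn k)) _ => /=.
by rewrite leq_mul ?leq_fact ?leq_pexp2l // -ltnS.
Qed.

End DownSets.

Definition asbool (P : Prop) : bool :=
  if excluded_middle_informative P then true else false.

Lemma asboolP (P : Prop) : reflect P (asbool P).
Proof. by rewrite /asbool; case: excluded_middle_informative => h; constructor. Qed.

Section Staircase.
Variables (n B : nat) (F : fieldType).
Implicit Types (I J : {mpoly F[n]} -> Prop) (x y : box n B).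

Definition box_mnm x : 'X_{1..n} := [multinom (x i : nat) | i < n].

Lemma box_mnm_inj : injective box_mnm.
Proof.
by move=> x y /mnmP xy; apply/ffunP => i; apply/val_inj; have := xy i; rewrite !mnmE.
Qed.

Lemma box_mnm_le x y : box_le y x -> (box_mnm y <= box_mnm x)%MM.
Proof. by move=> /forallP le_yx; apply/mnm_lepP => i; rewrite !mnmE. Qed.

Lemma box_mnm0 : box_mnm (box0 n B) = 0%MM.
Proof. by apply/mnmP => i; rewrite !mnmE ffunE. Qed.

Definition staircase I : {set box n B} := [set x | asbool (~ I 'X_[box_mnm x])].

Lemma staircase_small I : monomial_closed I -> quot_dim_eq I B.+1 ->
  downset (staircase I) && (0 < #|staircase I| <= B.+1).
Proof.
move=> closedI dimI; apply/and3P; split.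
- apply/forall_inP => x; rewrite inE => /asboolP x_std; apply/forallP => y.
  apply/implyP => le_yx; rewrite inE; apply/asboolP; apply: contra_not x_std.
  exact: (proj2 closedI) (box_mnm_le le_yx).
- rewrite card_gt0; apply/set0Pn; exists (box0 n B); rewrite inE box_mnm0.
  exact/asboolP/(monomial1_notin closedI dimI).
- apply: (card_standard_le closedI dimI (t := fun j => box_mnm (enum_val j))).
    by move=> j1 j2 /box_mnm_inj /enum_val_inj.
  by move=> j; have := enum_valP j; rewrite inE => /asboolP.
Qed.

Lemma staircase_inj I J :
  monomial_closed I -> quot_dim_eq I B.+1 -> monomial_closed J -> quot_dim_eq J B.+1 ->
  staircase I = staircase J -> same_set I J.
Proof.
move=> closedI dimI closedJ dimJ stIJ.
have memX a : I 'X_[a] <-> J 'X_[a].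
  have [a_small|/forallPn [i a_big]] := boolP [forall i, a i < B.+1]; last first.
    split=> _; apply: NNPP => a_std; move: a_big.
      by rewrite (standard_exponent_lt closedJ dimJ a_std).
    by rewrite (standard_exponent_lt closedI dimI a_std).
  pose x : box n B := [ffun i => Ordinal (forallP a_small i)].
  have -> : a = box_mnm x by apply/mnmP => i; rewrite !mnmE ffunE.
  have := congr1 (fun D : {set box n B} => x \in D) stIJ; rewrite /= !inE.
  by case: asboolP => stdI; case: asboolP => stdJ // _; split=> _; apply: NNPP.
move=> p; rewrite (proj1 closedI p) (proj1 closedJ p).
by split=> p_std a a_std; apply: p_std => /memX.
Qed.

End Staircase.

Lemma card_M_le_fact (F : fieldType) n K :
  0 < n -> 0 < K -> card_M_le n F K (K`! * n ^ K.-1).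
Proof.
case: K => // B n_gt0 _ m f [inM distinct].
have closed_dim j : monomial_closed (f j) /\ quot_dim_eq (f j) B.+1.
  by have [[S genS] dimf] := inM j; split=> //; apply: generated_monomial_closed genS.
pose st j := staircase B (f j).
have st_inj : injective st.
  move=> j1 j2 st12; apply: NNPP => /eqP /distinct; apply.
  have [closed1 dim1] := closed_dim j1; have [closed2 dim2] := closed_dim j2.
  exact: staircase_inj closed1 dim1 closed2 dim2 st12.
have : [set st j | j in 'I_m] \subset [set D | downset D & 0 < #|D| <= B.+1].
  apply/subsetP => _ /imsetP [j _ ->]; rewrite inE.
  by case: (closed_dim j) => closedf dimf; apply: staircase_small.
move/subset_leq_card; rewrite card_imset // card_ord => /leq_trans; apply.
exact: card_small_downsets.
Qed.

Local Open Scope ring_scope.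

Lemma card_M_eq1_dim1 n (F : fieldType) : card_M_eq1 n F 1.
Proof.
pose S (a : 'X_{1..n}) := a <> 0%MM.
pose M (p : {mpoly F[n]}) := exists s : seq ({mpoly F[n]} * 'X_{1..n}),
  (forall x, List.In x s -> S x.2) /\ p = \sum_(x <- s) x.1 * 'X_[x.2].
have genM : generated_by_monomials S M by [].
have memM p : M p <-> p@_0%MM = 0.
  rewrite (generated_by_monomialsP genM); split=> [p_std | p0 a not_mult].
    apply: p_std => -[s s_neq0 /mnm_lepP le_s0]; apply/s_neq0/mnmP => i.
    by move: (le_s0 i); rewrite !mnm0E leqn0 => /eqP.
  have -> // : a = 0%MM.
    by apply: NNPP => a_neq0; apply: not_mult; exists a; last exact: lepm_refl.
have dimM : quot_dim_eq M 1.
  exists (fun=> 1); split=> [c|p].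
    move/memM; rewrite raddf_sum big_ord1 /= mcoeffZ mcoeff1 eqxx mulr1 => c0 i.
    by rewrite (ord1 i).
  exists (fun=> p@_0%MM); apply/memM.
  by rewrite mcoeffB raddf_sum big_ord1 /= mcoeffZ mcoeff1 eqxx mulr1 subrr.
(* With colength 1 the box of exponents is the single point 0, which every
   staircase contains. *)
have stT (I : {mpoly F[n]} -> Prop) :
    monomial_closed I -> quot_dim_eq I 1 -> staircase 0 I = setT.
  move=> closedI dimI; apply/setP => x; rewrite !inE.
  have -> : x = box0 n 0 by apply/ffunP => i; rewrite ffunE; apply: ord1.
  by rewrite box_mnm0; apply/asboolP/(monomial1_notin closedI dimI).
have closedM := generated_monomial_closed genM.
exists M; split=> [|J [[S' genJ] dimJ]]; first by split=> //; exists S.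
have closedJ := generated_monomial_closed genJ.
by apply: (staircase_inj closedJ dimJ closedM dimM); rewrite !stT.
Qed.

Local Close Scope ring_scope.

Lemma leq_expn2r a b e : a <= b -> a ^ e <= b ^ e.
Proof. by case: e => // e; rewrite leq_exp2r. Qed.

Lemma fact_leq_expn j : j.+1`! <= j.+1 ^ j.
Proof.
elim: j => // j IHj; rewrite factS expnS leq_mul2l /=.
exact: leq_trans IHj (leq_expn2r _ (leqnSn _)).
Qed.

Lemma fact_expn_leq_bound n K : 0 < n -> 1 < K ->
  K`! * n ^ K.-1 <= K ^ n * (K + n - 2) ^ ((n - 1) * (K - 1)) * (2 * K - 3) ^ (K - 2).
Proof.
case: K => [|[|B]] //; case: n => [|n] // _ _.
have -> : B.+2 + n.+1 - 2 = B + n.+1 by lia.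
have -> : 2 * B.+2 - 3 = (2 * B).+1 by lia.
have -> : n.+1 - 1 = n by lia.
have -> : B.+2 - 1 = B.+1 by lia.
have -> : B.+2 - 2 = B by lia.
rewrite /= factS.
have le_fact : B.+1`! <= (2 * B).+1 ^ B.
  by apply: leq_trans (fact_leq_expn B) (leq_expn2r _ _); lia.
have le_exp : n.+1 ^ B.+1 <= (B + n.+1) ^ (n * B.+1).
  case: n => [|n]; first by rewrite mul0n expn0 exp1n.
  apply: leq_trans (leq_expn2r _ (leq_addl B _)) _.
  by rewrite leq_pexp2l ?addnS // leq_pmull.
have le_K : B.+2 <= B.+2 ^ n.+1 by rewrite -{1}(expn1 B.+2) leq_pexp2l.
apply: leq_trans (leq_mul (leq_mul le_K le_fact) le_exp) _.
by rewrite -!mulnA leq_mul2l [X in _ <= X]mulnC leqnn orbT.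
Qed.

Lemma fact_expn_leq_pow n K : 0 < n -> K`! * n ^ K.-1 <= (n * K) ^ K.
Proof.
move=> n_gt0; rewrite expnMn mulnC; case: K => // K.
by rewrite leq_mul ?leq_pexp2l // (leq_trans (fact_leq_expn K)) ?leq_pexp2l.
Qed.

Section RealBounds.
Local Open Scope R_scope.

Lemma INR_expn a k : INR (a ^ k) = INR a ^ k.
Proof. by elim: k => // k IHk; rewrite expnS -multE mult_INR IHk. Qed.

Lemma cube_le_exp z : 0 <= z -> (z / 3) ^ 3 <= exp z.
Proof.
move=> z_ge0; have -> : exp z = exp (z / 3) ^ 3.
  by rewrite /= Rmult_1_r -!exp_plus; congr exp; field.
by apply: pow_incr; split; [lra | have := exp_ineq1_le (z / 3); lra].
Qed.

(* (y L / 3)^3 = y^2 (y L^3 / 27) with y = sqrt K and L = ln r, so a K is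
   eventually below r^(sqrt K). *)
Lemma linear_le_Rpower_sqrt a r : 1 < r ->
  exists N : nat, forall K : nat, (N <= K)%N -> a * INR K <= Rpower r (sqrt (INR K)).
Proof.
move=> r_gt1; set L := ln r.
have L_gt0 : 0 < L by rewrite /L -ln_1; apply: ln_increasing; lra.
have L3_gt0 : 0 < L ^ 3 by apply: pow_lt.
have [M aM] := INR_unbounded (27 * a / L ^ 3).
exists (M * M)%N => K le_MK; set y := sqrt (INR K).
have y_ge0 : 0 <= y := sqrt_pos _.
have yy : y * y = INR K by apply: sqrt_sqrt; apply: pos_INR.
have My : INR M <= y.
  rewrite /y -(sqrt_square (INR M)); last exact: pos_INR.
  by apply: sqrt_le_1_alt; rewrite -mult_INR; apply: le_INR; apply/leP.
have ayL : 27 * a <= y * L ^ 3.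
  have : 27 * a / L ^ 3 < y by lra.
  by move/(Rmult_lt_compat_r (L ^ 3) _ _ L3_gt0); rewrite /Rdiv Rmult_assoc Rinv_l; lra.
apply: Rle_trans (cube_le_exp (Rmult_le_pos _ _ y_ge0 (Rlt_le _ _ L_gt0))).
rewrite -yy; have -> : (y * L / 3) ^ 3 = y * y * (y * L ^ 3) / 27 by simpl; field.
by nra.
Qed.

Lemma Rpower_three_halves x : 0 < x -> Rpower x (INR 3 / INR 2) = sqrt x * x.
Proof.
move=> x_gt0; have -> : INR 3 / INR 2 = / 2 + 1 by simpl; field.
by rewrite Rpower_plus Rpower_1 // Rpower_sqrt.
Qed.

Lemma Rpower_ge1 r y : 1 < r -> 0 <= y -> 1 <= Rpower r y.
Proof.
move=> r_gt1 y_ge0; rewrite -(Rpower_O r); last lra.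
by case: y_ge0 => [y_gt0|<-]; [left; apply: Rpower_lt|right].
Qed.

Lemma pow_le_Rpower_three_halves a r : 1 <= a -> 1 < r ->
  exists c, forall K : nat, (1 <= K)%N ->
    (a * INR K) ^ K <= c * Rpower r (Rpower (INR K) (INR 3 / INR 2)).
Proof.
move=> a_ge1 r_gt1; have [N aN] := linear_le_Rpower_sqrt a r_gt1.
set c := (a * INR N) ^ N + 1.
have aN_ge0 : 0 <= a * INR N by apply: Rmult_le_pos; [lra | apply: pos_INR].
have c_ge1 : 1 <= c by have := pow_le _ N aN_ge0; rewrite /c; lra.
exists c => K K_ge1; have K_pos : 0 < INR K by apply: lt_0_INR; apply/ltP.
rewrite Rpower_three_halves //.
have big_ge1 : 1 <= Rpower r (sqrt (INR K) * INR K).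
  by apply: Rpower_ge1 => //; apply: Rmult_le_pos; [apply: sqrt_pos | lra].
case: (leqP N K) => [le_NK|lt_KN].
  apply: Rle_trans (_ : Rpower r (sqrt (INR K) * INR K) <= _); last nra.
  rewrite -Rpower_mult Rpower_pow; last by apply: exp_pos.
  by apply: pow_incr; split; [nra | apply: aN].
apply: Rle_trans (_ : c <= _); last nra.
have N_ge1 : 1 <= INR N by apply: (le_INR 1); apply/leP; apply: leq_ltn_trans lt_KN.
apply: Rle_trans (_ : (a * INR N) ^ N <= _); last by rewrite /c; lra.
apply: Rle_trans (_ : (a * INR N) ^ K <= _).
  apply: pow_incr; split; first nra.
  by apply: Rmult_le_compat_l; [lra | apply/le_INR/leP/ltnW].
by apply: Rle_pow; [nra | apply/leP/ltnW].
Qed.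

End RealBounds.

Theorem mainTheorem1 (n : nat) (hn : (1 <= n)%N) :
  (forall F : fieldType, card_M_eq1 n F 1) /\
  (forall (F : fieldType) (K : nat), (2 <= K)%N ->
     card_M_le n F K
       (K ^ n * (K + n - 2) ^ ((n - 1) * (K - 1)) * (2 * K - 3) ^ (K - 2))%N) /\
  (forall r : R, Rlt (INR 1) r ->
     exists c : R, forall (F : fieldType) (K : nat), (1 <= K)%N ->
       card_M_leR n F K (Rmult c (Rpower r (Rpower (INR K) (Rdiv (INR 3) (INR 2)))))).
Proof.
split; first exact: card_M_eq1_dim1.
split=> [F K K_ge2 m f /(card_M_le_fact hn (ltnW K_ge2)) m_le|r r_gt1].
  exact: leq_trans m_le (fact_expn_leq_bound hn K_ge2).
have n_ge1 : Rle 1 (INR n) by apply: (le_INR 1); apply/leP.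
have [c c_bound] := pow_le_Rpower_three_halves n_ge1 r_gt1.
exists c => F K K_ge1 m f /(card_M_le_fact hn K_ge1) m_le.
apply: Rle_trans (c_bound K K_ge1); rewrite -mult_INR -INR_expn.
by apply/le_INR/leP; apply: leq_trans m_le (fact_expn_leq_pow _ hn).
Qed.
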